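(* Let $G$ be a connected simple graph (finite or infinite) with $C_G<\infty$. Then the set $DM(G)=\{\mu:\mu\text{ doubling measure on } G,\ C_\mu=C_G\}$ is a non-empty convex cone.
   Context: $G$ carries the shortest-path distance $d_G$. A measure on $G$ is a weight function $\mu:V_G\to(0,\infty)$, with $\mu(A)=\sum_{v\in A}\mu(v)$. Closed balls: $B(x,r)=\{y:d_G(x,y)\le r\}$. The doubling constant is $C_\mu=\sup\{\mu(B(x,2k+1))/\mu(B(x,k)):x\in V_G,\ k\in\{0,1,2,\dots\}\}$ (equivalently $\sup_{x,r>0}\mu(B^o(x,2r))/\mu(B^o(x,r))$ with open balls); $\mu$ is doubling if $C_\mu<\infty$, and $C_G=\inf\{C_\mu:\mu\text{ doubling on }G\}$. *)

From HB Require Import structures.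
From mathcomp Require Import all_boot all_order all_algebra.
From mathcomp Require Import all_classical all_reals.
From mathcomp Require Import ereal esum.
Set Implicit Arguments. Unset Strict Implicit. Unset Printing Implicit Defensive.
Import Order.TTheory GRing.Theory Num.Theory.
Local Open Scope classical_set_scope.
Local Open Scope ring_scope.

Section Graph.
Variable V : Type.
Variable adj : V -> V -> Prop.

Definition simple_graph : Prop :=
  (forall x y, adj x y -> adj y x) /\ (forall x, ~ adj x x).

Inductive walk : nat -> V -> V -> Prop :=
| walk0 x : walk 0 x x
| walkS n x z y : adj x z -> walk n z y -> walk n.+1 x y.

Definition connected_graph : Prop := forall x y, exists n, walk n x y.

Definition gdist (x y : V) : nat :=
  xget 0%N [set n | walk n x y /\ forall m, walk m x y -> (n <= m)%N].

Definition gball (x : V) (r : nat) : set V := [set y | (gdist x y <= r)%N].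

Variable R : realType.

Definition gmeasure (mu : V -> R) (A : set V) : \bar R :=
  esum (A : set {classic V}) (fun v => (mu v)%:E).

Definition is_measure (mu : V -> R) : Prop := forall v, 0 < mu v.

Definition doubling_const (mu : V -> R) : \bar R :=
  ereal_sup [set ((fine (gmeasure mu (gball x (2 * k).+1)))
                  / (fine (gmeasure mu (gball x k))))%:E
            | x in [set: V] & k in [set: nat]].

(* mu is doubling: a measure, whose balls have finite measure
   (so that the ratios are real numbers), and C_mu < oo *)
Definition doubling (mu : V -> R) : Prop :=
  [/\ is_measure mu,
      (forall x k, gmeasure mu (gball x k) < +oo)%E
    & (doubling_const mu < +oo)%E].

Definition graph_doubling_const : \bar R :=
  ereal_inf [set doubling_const mu | mu in doubling].

Definition DM : set (V -> R) :=
  [set mu | doubling mu /\ doubling_const mu = graph_doubling_const].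

End Graph.

Definition convex_cone (V : Type) (R : realType) (S : set (V -> R)) : Prop :=
  (forall mu (l : R), S mu -> 0 < l -> S (fun v => l * mu v)) /\
  (forall mu nu (t : R), S mu -> S nu -> 0 <= t <= 1 ->
      S (fun v => t * mu v + (1 - t) * nu v)).

From mathcomp Require Import all_boot all_order all_algebra.
From mathcomp Require Import all_classical all_reals.
From mathcomp Require Import ereal esum topology normedtype finmap.
Import Order.TTheory GRing.Theory Num.Theory.
Import numFieldNormedType.Exports.
Local Open Scope classical_set_scope.
Local Open Scope ring_scope.
Set Implicit Arguments. Unset Strict Implicit. Unset Printing Implicit Defensive.

(* A doubling measure gives every vertex finitely many neighbours, so balls are
   finite and C_mu <= c says exactly that mu(B(x,2k+1)) <= c mu(B(x,k)) for all
   x and k: a family of inequalities invariant under scaling and stable under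
   convex combinations, which gives the cone.  For existence, take doubling measures with C_mu decreasing
   to C_G, normalised to 1 at a base point o.  Comparing neighbours gives
   C^-d(o,v) <= mu(v) <= C^d(o,v), so by Tychonoff the sequence has a pointwise
   cluster point mu; each ball inequality involves finitely many values, hence
   passes to mu with constant C_G + e for every e > 0, and mu lies in DM(G). *)

Section PointwiseTopology.
Variables (I : eqType) (R : realType).

Lemma ptws_sum_cvg (G : set_system {ptws I -> R}) (f : {ptws I -> R}) (s : seq I) :
  Filter G -> G --> f -> \sum_(i <- s) g i @[g --> G] --> \sum_(i <- s) f i.
Proof.
move=> FG Gf; apply: cvg_big => // [|i _]; first exact: add_continuous.
by apply: cvg_trans (@proj_continuous _ (fun _ : I => R) i f); apply: cvg_app.
Qed.

Lemma ptws_bounded_cluster (lo hi : I -> R) (u : nat -> {ptws I -> R}) :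
  (forall n i, lo i <= u n i <= hi i) ->
  exists2 f : {ptws I -> R}, (forall i, lo i <= f i <= hi i) & cluster (u @ \oo) f.
Proof.
move=> u_bd.
have box_compact : compact [set f : {ptws I -> R} | forall i, `[lo i, hi i]%classic (f i)].
  by apply: (@tychonoff I (fun=> R) (fun i => `[lo i, hi i]%classic)) => i; exact: segment_compact.
have [|f [box_f cl_f]] := box_compact (u @ \oo) _.
  by exists 0%N => // n _ i; rewrite /= in_itv u_bd.
by exists f => // i; have := box_f i; rewrite /= in_itv.
Qed.

End PointwiseTopology.

Section GraphDistance.
Variables (V : Type) (adj : V -> V -> Prop).
Hypothesis conn : connected_graph adj.

Lemma gdistP x y : walk adj (gdist adj x y) x y /\
  forall m, walk adj m x y -> (gdist adj x y <= m)%N.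
Proof.
rewrite /gdist; set P := [set n | _]; suff: exists n, P n by move/(xgetPex 0%N).
have [n0 w0] := conn x y.
have /ex_minnP[n /asboolP wn minn] : exists n, `[< walk adj n x y >].
  by exists n0; apply/asboolP.
by exists n; split=> // m wm; apply/minn/asboolP.
Qed.

Lemma gdist_min x y m : walk adj m x y -> (gdist adj x y <= m)%N.
Proof. exact: (gdistP x y).2. Qed.

Lemma gball0 x : gball adj x 0 = [set x].
Proof.
apply/seteqP; split=> y; last by move=> ->; apply: gdist_min; exact: walk0.
rewrite /gball /= leqn0 => /eqP d0; have [+ _] := gdistP x y.
by rewrite d0 => w; inversion w.
Qed.

Lemma gball_center x r : gball adj x r x.
Proof. exact: leq_trans (gdist_min (walk0 adj x)) (leq0n r). Qed.

Lemma adj_gball1 x z : adj x z -> gball adj x 1 z.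
Proof. by move=> xz; apply: gdist_min; exact: walkS xz (walk0 _ _). Qed.

Lemma gballS x r y : gball adj x r.+1 y ->
  y = x \/ exists2 z, adj x z & gball adj z r y.
Proof.
rewrite /gball /=; have [w _] := gdistP x y.
move: w; set m := gdist adj x y => w; inversion w => [|le]; first by left.
by right; exists z => //; exact: leq_trans (gdist_min H1) _.
Qed.

Lemma gball_finite : (forall x, finite_set [set y | adj x y]) ->
  forall x r, finite_set (gball adj x r).
Proof.
move=> nbr_fin x r; elim: r x => [|r IH] x; first by rewrite gball0; exact: finite_set1.
apply: (@sub_finite_set _ _ ([set x] `|` \bigcup_(z in [set y | adj x y]) gball adj z r)).
  by move=> y /gballS [->|[z xz zy]]; [left|right; exists z].
by rewrite finite_setU; split; [exact: finite_set1|exact: bigcup_finite].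
Qed.

End GraphDistance.

Section GraphMeasure.
Variables (V : Type) (adj : V -> V -> Prop) (R : realType).
Hypothesis adj_sym : forall x y, adj x y -> adj y x.
Hypothesis conn : connected_graph adj.
Implicit Types (mu : V -> R) (A B : set V).
Local Notation gm := (@gmeasure V R).

Lemma gmeasure_ge0 mu A : (forall v, 0 <= mu v) -> (0 <= gm mu A)%E.
Proof. by move=> mu0; apply: esum_ge0 => v _; rewrite lee_fin. Qed.

Lemma le_gmeasure mu A B : (forall v, 0 <= mu v) -> A `<=` B ->
  (gm mu A <= gm mu B)%E.
Proof.
move=> mu0 AB; apply: ge_ereal_sup => _ [X [finX XA] <-].
by apply: esum_ge; exists X => //; split=> //; exact: subset_trans AB.
Qed.

Lemma fine_le_gmeasure mu A B : (forall v, 0 <= mu v) ->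
  (gm mu B < +oo)%E -> A `<=` B -> fine (gm mu A) <= fine (gm mu B).
Proof.
move=> mu0 Bfin AB; have AB' := le_gmeasure mu0 AB.
by apply: fine_le => //; rewrite ge0_fin_numE ?gmeasure_ge0 //; exact: le_lt_trans AB' Bfin.
Qed.

Lemma gmeasure_set1 mu x : 0 <= mu x -> gm mu [set x] = (mu x)%:E.
Proof. by move=> mux; rewrite /gmeasure esum_set1 // lee_fin. Qed.

Lemma gmeasure_finite mu A : (forall v, 0 <= mu v) -> finite_set A ->
  gm mu A = (\sum_(v \in (A : set {classic V})) mu v)%:E.
Proof.
move=> mu0 Afin; rewrite /gmeasure esum_fset ?fsumEFin // => v _.
by rewrite lee_fin.
Qed.

Definition ball_ratio mu x k :=
  fine (gm mu (gball adj x (2 * k).+1)) / fine (gm mu (gball adj x k)).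

Lemma ball_ratio_le_doubling_const mu x k :
  ((ball_ratio mu x k)%:E <= doubling_const adj mu)%E.
Proof. by apply: ereal_sup_ubound; exists x => //; exists k. Qed.

Section Doubling.
Variables (mu : V -> R) (c : R).
Hypotheses (mu_doubling : doubling adj mu) (mu_le_c : (doubling_const adj mu <= c%:E)%E).

Let mu_gt0 : is_measure mu. Proof. by case: mu_doubling. Qed.
Let mu_ge0 v : 0 <= mu v. Proof. exact/ltW/mu_gt0. Qed.
Let ball_fin x k : (gm mu (gball adj x k) < +oo)%E. Proof. by case: mu_doubling. Qed.

Lemma doubling_gball1_le x : fine (gm mu (gball adj x 1)) <= c * mu x.
Proof.
have := le_trans (ball_ratio_le_doubling_const mu x 0) mu_le_c.
by rewrite lee_fin /ball_ratio muln0 gball0 // gmeasure_set1 //= ler_pdivrMr.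
Qed.

Lemma doubling_adj_le x z : adj x z -> mu z <= c * mu x.
Proof.
move=> xz; apply: le_trans (doubling_gball1_le x).
have := fine_le_gmeasure mu_ge0 (ball_fin x 1) (_ : [set z] `<=` gball adj x 1).
by rewrite gmeasure_set1 //; apply=> y ->; exact: adj_gball1.
Qed.

Lemma doubling_walk_le n x y : walk adj n x y ->
  mu y <= c ^+ n * mu x /\ mu x <= c ^+ n * mu y.
Proof.
elim=> {n x y} [x|n x z y xz _ [IH1 IH2]]; first by rewrite expr0 !mul1r.
have zx := doubling_adj_le (adj_sym xz); have c_ge0 : 0 <= c.
  by have := lt_le_trans (mu_gt0 x) zx; rewrite pmulr_lgt0 // => /ltW.
split; last by apply: le_trans zx _; rewrite exprS -mulrA ler_wpM2l.
apply: le_trans IH1 _.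
by rewrite exprSr -mulrA ler_wpM2l ?exprn_ge0 ?doubling_adj_le.
Qed.

Lemma doubling_gdist_bounds o v : mu o = 1 ->
  (c ^+ gdist adj o v)^-1 <= mu v <= c ^+ gdist adj o v.
Proof.
move=> muo; have [w _] := gdistP conn o v.
have [le_mu le_1] := doubling_walk_le w; rewrite muo mulr1 in le_mu le_1.
have cd_gt0 : 0 < c ^+ gdist adj o v.
  by have := lt_le_trans ltr01 le_1; rewrite pmulr_lgt0.
by rewrite le_mu andbT -[_^-1]mul1r ler_pdivrMr // mulrC.
Qed.

End Doubling.

(* Every neighbour y of x has mu y >= mu x / c and lies in B(x,1), whose mass
   is at most c mu x: so x has at most c^2 neighbours. *)
Lemma doubling_nbr_finite mu x : doubling adj mu -> finite_set [set y | adj x y].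
Proof.
move=> dmu; have [mu_gt0 mu_fin dlt] := dmu.
have mu_ge0 v : 0 <= mu v by exact/ltW.
pose c := Num.max 1 (fine (doubling_const adj mu)).
have c_gt0 : 0 < c by rewrite lt_max ltr01.
have dc : (doubling_const adj mu <= c%:E)%E.
  rewrite /c; case: doubling_const dlt => [r _|//|_] /=; rewrite ?leNye //.
  by rewrite lee_fin le_max lexx orbT.
apply: contrapT => /(@infinite_set_fset {classic V} _ (Num.bound (c * c)))[B BN nB].
have sumB : \sum_(v <- B) mu v <= c * mu x.
  apply: le_trans (doubling_gball1_le dmu dc x).
  have BS : [set` B] `<=` gball adj x 1 by move=> y /BN; exact: adj_gball1.
  have := fine_le_gmeasure mu_ge0 (mu_fin x 1) BS.
  have Bfin := finite_fset B.
  by rewrite gmeasure_finite ?fsbig_finite ?set_fsetK.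
have Bsum : #|`B|%:R * (mu x / c) <= \sum_(v <- B) mu v.
  rewrite -sum1_size natr_sum mulr_suml big_seq [leRHS]big_seq; apply: ler_sum => v /BN xv.
  by rewrite mul1r ler_pdivrMr // mulrC; apply: doubling_adj_le dmu dc _ _ (adj_sym xv).
have : #|`B|%:R <= c * c.
  have := le_trans Bsum sumB; rewrite mulrA ler_pdivrMr // => h.
  by rewrite -(ler_pM2r (mu_gt0 x)); apply: le_trans h _; rewrite mulrAC.
apply/negP; rewrite -ltNge; apply: lt_le_trans (archi_boundP _) _.
  by rewrite mulr_ge0 // ltW.
by rewrite ler_nat.
Qed.

Lemma exists_doubling : (graph_doubling_const adj R < +oo)%E -> exists mu, doubling adj mu.
Proof.
apply: contraPP => /forallNP nodoubling; rewrite /graph_doubling_const.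
suff -> : [set doubling_const adj mu | mu in @doubling V adj R] = set0 by rewrite ereal_inf0.
by apply/seteqP; split=> // _ [mu /nodoubling []].
Qed.

Lemma DM_empty mu : (V -> False) -> DM adj mu.
Proof.
move=> V0; have dc_Ny nu : doubling_const adj nu = -oo%E.
  by apply/eqP; rewrite eq_le leNye andbT; apply: ge_ereal_sup => y [x]; case: (V0 x).
have dbl nu : doubling adj nu by split=> [v|v|]; [case: (V0 v)|case: (V0 v)|rewrite dc_Ny].
split=> //; apply/eqP; rewrite eq_le dc_Ny leNye /=.
by apply: ereal_inf_lbound; exists mu.
Qed.

End GraphMeasure.

Section FiniteBalls.
Variables (V : Type) (adj : V -> V -> Prop) (R : realType).
Hypothesis conn : connected_graph adj.
Hypothesis adj_sym : forall x y, adj x y -> adj y x.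
Hypothesis gball_fin : forall x r, finite_set (gball adj x r).
Implicit Types (mu nu : V -> R) (c : R).

Definition ball_mass mu x r := \sum_(v \in (gball adj x r : set {classic V})) mu v.

Definition ball_doubling c mu :=
  forall x k, ball_mass mu x (2 * k).+1 <= c * ball_mass mu x k.

Lemma gmeasure_gball mu x r : (forall v, 0 <= mu v) ->
  gmeasure mu (gball adj x r) = (ball_mass mu x r)%:E.
Proof. by move=> mu0; rewrite gmeasure_finite. Qed.

Lemma ball_ratioE mu x k : (forall v, 0 <= mu v) ->
  ball_ratio adj mu x k = ball_mass mu x (2 * k).+1 / ball_mass mu x k.
Proof. by move=> mu0; rewrite /ball_ratio !gmeasure_gball. Qed.

Lemma ball_mass_ge_center mu x r : (forall v, 0 <= mu v) -> mu x <= ball_mass mu x r.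
Proof.
move=> mu0; have := le_gmeasure mu0 (_ : [set x] `<=` gball adj x r).
by rewrite gmeasure_set1 // gmeasure_gball // lee_fin; apply=> y ->; exact: gball_center.
Qed.

Lemma ball_mass_gt0 mu x r : is_measure mu -> 0 < ball_mass mu x r.
Proof.
by move=> mu_gt0; apply: lt_le_trans (mu_gt0 x) (ball_mass_ge_center _ _ _) => v; exact/ltW.
Qed.

Lemma ball_mass_le mu x r s : (forall v, 0 <= mu v) -> (r <= s)%N ->
  ball_mass mu x r <= ball_mass mu x s.
Proof.
move=> mu0 rs; have := le_gmeasure mu0 (_ : gball adj x r `<=` gball adj x s).
by rewrite !gmeasure_gball // lee_fin; apply=> y /leq_trans; apply.
Qed.

Lemma ball_massZ mu a x r : ball_mass (fun v => a * mu v) x r = a * ball_mass mu x r.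
Proof. by rewrite /ball_mass mulr_fsumr. Qed.

Lemma ball_massD mu nu x r :
  ball_mass (fun v => mu v + nu v) x r = ball_mass mu x r + ball_mass nu x r.
Proof. by rewrite /ball_mass fsbig_split. Qed.

Lemma doubling_const_le_ball_doubling mu c : is_measure mu ->
  (doubling_const adj mu <= c%:E)%E <-> ball_doubling c mu.
Proof.
move=> mu_gt0; have mu_ge0 v : 0 <= mu v by exact/ltW.
split=> [dc x k|bd].
  have := le_trans (ball_ratio_le_doubling_const adj mu x k) dc.
  by rewrite lee_fin ball_ratioE // ler_pdivrMr // ball_mass_gt0.
apply: ge_ereal_sup => _ [x _ [k _ <-]].
by rewrite lee_fin -/(ball_ratio adj mu x k) ball_ratioE // ler_pdivrMr // ball_mass_gt0.
Qed.

Lemma ball_doubling_doubling mu c : is_measure mu -> ball_doubling c mu -> doubling adj mu.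
Proof.
move=> mu_gt0 /(doubling_const_le_ball_doubling c mu_gt0) dc; split=> //.
  by move=> x k; rewrite gmeasure_gball ?ltry // => v; exact/ltW.
exact: le_lt_trans dc (ltry _).
Qed.

Lemma ball_ratioZ mu a x k : is_measure mu -> 0 < a ->
  ball_ratio adj (fun v => a * mu v) x k = ball_ratio adj mu x k.
Proof.
move=> mu_gt0 a_gt0; have mu_ge0 v : 0 <= mu v by exact/ltW.
rewrite !ball_ratioE // ?ball_massZ; last by move=> v; rewrite mulr_ge0 // ltW.
by rewrite invfM mulrACA divff ?mul1r // gt_eqF.
Qed.

Lemma doubling_constZ mu a : is_measure mu -> 0 < a ->
  doubling_const adj (fun v => a * mu v) = doubling_const adj mu.
Proof.
move=> mu_gt0 a_gt0; rewrite /doubling_const; congr ereal_sup.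
by apply/seteqP; split=> _ [x _ [k _ <-]]; exists x => //; exists k => //;
  rewrite -/(ball_ratio adj _ x k) -/(ball_ratio adj _ x k) ball_ratioZ.
Qed.

Lemma doublingZ mu a : doubling adj mu -> 0 < a -> doubling adj (fun v => a * mu v).
Proof.
move=> [mu_gt0 _ dlt] a_gt0; have amu_gt0 : is_measure (fun v => a * mu v).
  by move=> v; rewrite mulr_gt0.
split; rewrite ?doubling_constZ // => x k.
by rewrite gmeasure_gball ?ltry // => v; exact/ltW.
Qed.

Lemma is_measure_conv mu nu t : is_measure mu -> is_measure nu -> 0 <= t <= 1 ->
  is_measure (fun v => t * mu v + (1 - t) * nu v).
Proof.
move=> mu_gt0 nu_gt0 /andP[t_ge0 t_le1] v; have [t_lt1|t_ge1] := ltP t 1.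
  by apply: ltr_wpDl; rewrite ?mulr_ge0 ?mulr_gt0 ?subr_gt0 // ltW.
by rewrite (@le_anti _ _ t 1) ?t_le1 // subrr mul0r addr0 mul1r.
Qed.

Lemma doubling_const_conv_le mu nu t (c : \bar R) :
  is_measure mu -> is_measure nu -> 0 <= t <= 1 ->
  (doubling_const adj mu <= c)%E -> (doubling_const adj nu <= c)%E ->
  (doubling_const adj (fun v => (t * mu v + (1 - t) * nu v)%R) <= c)%E.
Proof.
move=> mu_gt0 nu_gt0 t01 dmu dnu; have /andP[t_ge0 t_le1] := t01.
case: c dmu dnu => [c||] dmu dnu; last 2 first.
- exact: leey.
- apply: ge_ereal_sup => _ [x _ [k _ <-]]; move: dmu.
  by have := ball_ratio_le_doubling_const adj mu x k; move/le_trans/[apply]; rewrite leeNy_eq.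
have conv_gt0 := is_measure_conv mu_gt0 nu_gt0 t01.
move: dmu dnu; rewrite !doubling_const_le_ball_doubling // => bmu bnu x k.
rewrite !ball_massD !ball_massZ mulrDr (mulrCA c t) (mulrCA c (1 - t)).
by rewrite lerD // ler_wpM2l ?subr_ge0.
Qed.

Lemma ball_doubling_addgt0 mu c : is_measure mu ->
  (forall e, 0 < e -> ball_doubling (c + e) mu) -> ball_doubling c mu.
Proof.
move=> mu_gt0 bd x k; apply/ler_addgt0Pr => e e_gt0.
have bk_gt0 := ball_mass_gt0 x k mu_gt0.
by have := bd _ (divr_gt0 e_gt0 bk_gt0) x k; rewrite mulrDl divfK ?gt_eqF.
Qed.

Lemma cluster_ball_doubling c (F : set_system {ptws {classic V} -> R}) mu :
  Filter F -> F (ball_doubling c) -> cluster F mu -> ball_doubling c mu.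
Proof.
move=> FF Fbd; rewrite cluster_cvgE => -[G PG [Gmu FG]] x k.
have ball_mass_cvg r : ball_mass g x r @[g --> G] --> ball_mass mu x r.
  rewrite /ball_mass fsbig_finite //; under eq_fun => g do rewrite fsbig_finite //.
  exact: ptws_sum_cvg.
rewrite -subr_ge0; apply: (@cvgr_to_ge _ G PG R
  (fun g => c * ball_mass g x k - ball_mass g x (2 * k).+1)).
  apply: (@cvgB _ _ _ _ PG); last exact: ball_mass_cvg.
  by apply: (cvgMl_tmp (F := G)); exact: ball_mass_cvg.
by apply: filterS (FG _ Fbd) => g; rewrite subr_ge0; apply.
Qed.

Lemma doubling_const_ge1 mu (o : V) : is_measure mu -> (1 <= doubling_const adj mu)%E.
Proof.
move=> mu_gt0; have mu_ge0 v : 0 <= mu v by exact/ltW.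
apply: le_trans (ball_ratio_le_doubling_const adj mu o 0).
by rewrite lee_fin ball_ratioE // ler_pdivlMr ?ball_mass_gt0 // mul1r ball_mass_le.
Qed.

Lemma graph_doubling_const_ge1 (o : V) : (1 <= graph_doubling_const adj R)%E.
Proof. by apply: le_ereal_inf_tmp => _ [mu [mu_gt0 _ _] <-]; exact: doubling_const_ge1. Qed.

Lemma near_optimal_doubling (o : V) e : (graph_doubling_const adj R < +oo)%E -> 0 < e ->
  exists mu, [/\ doubling adj mu, mu o = 1 &
    (doubling_const adj mu < graph_doubling_const adj R + e%:E)%E].
Proof.
move=> CG_lt e_gt0; have CG_ge1 := graph_doubling_const_ge1 o.
have CG_fin : graph_doubling_const adj R \is a fin_num.
  by rewrite ge0_fin_numE // (le_trans _ CG_ge1).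
have [_ [nu dnu <-] nu_lt] := lb_ereal_inf_adherent e_gt0 CG_fin.
have [nu_gt0 _ _] := dnu; have nuo_gt0 : 0 < (nu o)^-1 by rewrite invr_gt0.
exists (fun v => (nu o)^-1 * nu v); split.
- exact: doublingZ.
- by rewrite mulVf ?gt_eqF.
- by rewrite doubling_constZ.
Qed.

Lemma DM_scale mu a : DM adj mu -> 0 < a -> DM adj (fun v => a * mu v).
Proof.
move=> [dmu CGE] a_gt0; have [mu_gt0 _ _] := dmu.
by split; [exact: doublingZ|rewrite doubling_constZ].
Qed.

Lemma DM_conv mu nu t : DM adj mu -> DM adj nu -> 0 <= t <= 1 ->
  DM adj (fun v => t * mu v + (1 - t) * nu v).
Proof.
move=> [[mu_gt0 _ mu_lt] muE] [[nu_gt0 _ _] nuE] t01.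
have conv_le : (doubling_const adj (fun v => (t * mu v + (1 - t) * nu v)%R)
    <= graph_doubling_const adj R)%E.
  by apply: doubling_const_conv_le; rewrite ?muE ?nuE.
have conv_gt0 := is_measure_conv mu_gt0 nu_gt0 t01.
have dconv : doubling adj (fun v => t * mu v + (1 - t) * nu v).
  split=> //; last by rewrite (le_lt_trans conv_le) // -muE.
  by move=> x k; rewrite gmeasure_gball ?ltry // => v; exact/ltW.
split=> //; apply/eqP; rewrite eq_le conv_le /=.
by apply: ereal_inf_lbound; exists (fun v => t * mu v + (1 - t) * nu v).
Qed.

Lemma DM_convex_cone : convex_cone (@DM V adj R).
Proof. by split=> [mu a|mu nu t]; [exact: DM_scale|exact: DM_conv]. Qed.

Lemma DM_nonempty (o : V) : (graph_doubling_const adj R < +oo)%E -> @DM V adj R !=set0.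
Proof.
move=> CG_lt; have CG_ge1 := graph_doubling_const_ge1 o.
have [c CGE] : exists c, graph_doubling_const adj R = c%:E.
  exists (fine (graph_doubling_const adj R)).
  by rewrite fineK // ge0_fin_numE // (le_trans _ CG_ge1).
have c_ge0 : 0 <= c by rewrite -lee_fin -CGE (le_trans _ CG_ge1).
have /choice[nu nuP] n : exists nu, [/\ doubling adj nu, nu o = 1 &
    (doubling_const adj nu < (c + n.+1%:R^-1)%:E)%E].
  by rewrite EFinD -CGE; apply: near_optimal_doubling.
pose C := c + 1.
have nu_le n : (doubling_const adj (nu n) <= C%:E)%E.
  have [_ _ nu_lt] := nuP n; apply/ltW/(lt_le_trans nu_lt).
  by rewrite lee_fin lerD2l invf_le1 ?ler1n.
have nu_bd n v : (C ^+ gdist adj o v)^-1 <= nu n v <= C ^+ gdist adj o v.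
  by have [dnu nuo _] := nuP n; exact: doubling_gdist_bounds.
have [mu mu_bd mu_cl] := @ptws_bounded_cluster {classic V} R _ _ nu nu_bd.
have mu_gt0 : is_measure mu.
  move=> v; have /andP[+ _] := mu_bd v; apply: lt_le_trans.
  by rewrite invr_gt0 exprn_gt0 // ltr_wpDl.
have mu_dbl : ball_doubling c mu.
  apply: ball_doubling_addgt0 => // e e_gt0; apply: cluster_ball_doubling mu_cl.
  apply: filterS (near_infty_natSinv_lt (PosNum e_gt0)) => n /= n_lt.
  have [[nu_gt0 _ _] _ nu_lt] := nuP n.
  apply/doubling_const_le_ball_doubling => //; apply/ltW/(lt_le_trans nu_lt).
  by rewrite lee_fin lerD2l ltW.
have dmu := ball_doubling_doubling mu_gt0 mu_dbl.
exists mu; split=> //; apply/eqP; rewrite eq_le; apply/andP; split.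
  by rewrite CGE; exact/doubling_const_le_ball_doubling.
by apply: ereal_inf_lbound; exists mu.
Qed.

End FiniteBalls.

Unset Implicit Arguments.

Theorem proposition2p2 (R : realType) (V : Type) (adj : V -> V -> Prop) :
  simple_graph adj -> connected_graph adj ->
  (graph_doubling_const adj R < +oo)%E ->
  @DM V adj R !=set0 /\ convex_cone (@DM V adj R).
Proof.
move=> [adj_sym _] conn CG_lt; have [mu0 dmu0] := exists_doubling CG_lt.
have gball_fin := gball_finite conn (fun x => doubling_nbr_finite adj_sym conn x dmu0).
split; last exact: DM_convex_cone.
have [[o _]|V0] := pselect (exists o : V, True).
  exact: DM_nonempty adj_sym gball_fin o CG_lt.
by exists (fun=> 1); apply: DM_empty => v; apply: V0; exists v.
Qed.
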